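(* Let $G$ be a connected graph, let $L$ be a list-assignment with $|L(u)|\ge\deg(u)+1$ for all $u\in V(G)$, and let $\alpha$ be an $L$-colouring. Fix $v,w\in V(G)$, let $d:=\mathrm{dist}(v,w)$, and let $P$ be a shortest $v,w$-path. If $v$ is unfrozen under $\alpha$, then there exists a recolouring sequence $\mathcal{S}$ from $\alpha$ to some $L$-colouring $\gamma$ such that (i) $w$ is unfrozen under $\gamma$, (ii) every vertex recoloured during $\mathcal{S}$ belongs to $V(P)\setminus\{w\}$, and (iii) $|\mathcal{S}|\le d$. Moreover, if $|L(v)|\ge\deg(v)+2$, then $v$ is also unfrozen under $\gamma$.
   Context: An $L$-colouring is a proper colouring $\varphi$ with $\varphi(v)\in L(v)$ for all $v$. A recolouring sequence is a sequence of single-vertex recolouring steps, each changing the colour of one vertex to another colour of its list so that the colouring remains proper; $|\mathcal{S}|$ is its number of steps. A vertex $u$ is frozen under $\varphi$ if every colour of $L(u)\setminus\{\varphi(u)\}$ appears on a neighbour of $u$, and unfrozen otherwise. *)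

From mathcomp Require Import all_boot.
Set Implicit Arguments. Unset Strict Implicit. Unset Printing Implicit Defensive.

Definition simple_graph (T : finType) (e : rel T) : Prop :=
  symmetric e /\ irreflexive e.

Definition connected_graph (T : finType) (e : rel T) : Prop :=
  forall x y : T, connect e x y.

Definition nbhd (T : finType) (e : rel T) (u : T) : {set T} := [set x | e u x].
Definition deg (T : finType) (e : rel T) (u : T) : nat := #|nbhd e u|.

Definition L_colouring (T C : finType) (e : rel T) (L : T -> {set C})
    (phi : {ffun T -> C}) : Prop :=
  (forall u, phi u \in L u) /\ (forall u x, e u x -> phi u != phi x).

Definition frozen (T C : finType) (e : rel T) (L : T -> {set C})
    (phi : {ffun T -> C}) (u : T) : Prop :=
  forall c, c \in L u -> c != phi u -> exists2 x, e u x & phi x = c.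

Definition unfrozen (T C : finType) (e : rel T) (L : T -> {set C})
    (phi : {ffun T -> C}) (u : T) : Prop := ~ frozen e L phi u.

Definition recol_step (T C : finType) (phi psi : {ffun T -> C}) : Prop :=
  exists x, phi x != psi x /\ forall y, y != x -> phi y = psi y.

(* A recolouring sequence from alpha: the list s of successive colourings
   after each step; every intermediate colouring is an L-colouring; |S| = size s. *)
Fixpoint recol_seq (T C : finType) (e : rel T) (L : T -> {set C})
    (phi : {ffun T -> C}) (s : seq {ffun T -> C}) : Prop :=
  match s with
  | [::] => True
  | psi :: s' => recol_step phi psi /\ L_colouring e L psi /\ recol_seq e L psi s'
  end.

Fixpoint recoloured_in (T C : finType) (phi : {ffun T -> C})
    (s : seq {ffun T -> C}) (x : T) : Prop :=
  match s with
  | [::] => False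
  | psi :: s' => phi x != psi x \/ recoloured_in psi s' x
  end.

(* P (as the list of vertices after v) is a v,w-path of minimal length;
   its length is size P = dist(v,w). *)
Definition shortest_path (T : finType) (e : rel T) (v w : T) (P : seq T) : Prop :=
  [/\ path e v P, last v P = w &
      forall Q : seq T, path e v Q -> last v Q = w -> size P <= size Q].

(** Walk along the shortest path P = v, p_1, ..., w while keeping the current
    vertex unfrozen.  If the next vertex x is unfrozen, just move on.  If x is
    frozen, then |L(x)| >= deg(x) + 1 forces the neighbours of x to carry
    pairwise distinct colours covering exactly L(x) minus the colour of x; so
    recolouring the current (unfrozen) vertex u with a free colour removes the
    colour of u from the neighbourhood of x, which thaws x.  Each vertex of
    P other than w is recoloured at most once.  Minimality of P keeps w off
    the recoloured vertices, and if |L(v)| >= deg(v) + 2 then v can never be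
    frozen. *)

From mathcomp Require Import all_boot.
Set Implicit Arguments. Unset Strict Implicit. Unset Printing Implicit Defensive.

Section Recolouring.
Variables (T C : finType) (e : rel T) (L : T -> {set C}).

Lemma frozenP (phi : {ffun T -> C}) u :
  reflect (frozen e L phi u)
          [forall c in L u, (c != phi u) ==> [exists x, e u x && (phi x == c)]].
Proof.
apply: (iffP forall_inP) => [frz c cL cne | frz c cL].
  have /existsP[x /andP[eux /eqP]] := implyP (frz c cL) cne.
  by exists x.
by apply/implyP => /(frz c cL)[x eux phix]; apply/existsP; exists x; rewrite eux phix /=.
Qed.

Lemma unfrozen_free_colour (phi : {ffun T -> C}) u :
  unfrozen e L phi u ->
  exists c, [/\ c \in L u, c != phi u & forall y, e u y -> phi y != c].
Proof.
move/frozenP/forall_inPn => [c cL]; rewrite negb_imply negb_exists.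
case/andP=> cne /forallP free; exists c; split=> // y euy.
by have := free y; rewrite euy.
Qed.

Lemma frozen_subset_imset (phi : {ffun T -> C}) u :
  frozen e L phi u -> L u :\ phi u \subset phi @: nbhd e u.
Proof.
move=> frz; apply/subsetP => c; rewrite in_setD1 => /andP[cne cL].
have [y euy <-] := frz c cL cne.
by apply: imset_f; rewrite inE.
Qed.

Lemma card_list_frozen (phi : {ffun T -> C}) u :
  phi u \in L u -> frozen e L phi u -> #|L u| <= deg e u + 1.
Proof.
move=> phiuL frz; rewrite (cardsD1 (phi u)) phiuL addnC leq_add2r.
exact: leq_trans (subset_leq_card (frozen_subset_imset frz)) (leq_imset_card _ _).
Qed.

Lemma unfrozen_card_list (phi : {ffun T -> C}) u :
  phi u \in L u -> deg e u + 2 <= #|L u| -> unfrozen e L phi u.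
Proof.
move=> phiuL large /(card_list_frozen phiuL) small.
by have := leq_trans large small; rewrite leq_add2l.
Qed.

Lemma recol_seq_last (phi : {ffun T -> C}) s :
  L_colouring e L phi -> recol_seq e L phi s -> L_colouring e L (last phi s).
Proof. by elim: s phi => [|psi s IH] phi //= _ [_ [psiL /IH]]; apply. Qed.

Definition recolour (phi : {ffun T -> C}) u c : {ffun T -> C} :=
  [ffun y => if y == u then c else phi y].

Lemma recolour_id (phi : {ffun T -> C}) u c : recolour phi u c u = c.
Proof. by rewrite ffunE eqxx. Qed.

Lemma recolour_other (phi : {ffun T -> C}) u c y :
  y != u -> recolour phi u c y = phi y.
Proof. by rewrite ffunE => /negbTE->. Qed.

Lemma recol_step_recolour (phi : {ffun T -> C}) u c :
  c != phi u -> recol_step phi (recolour phi u c).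
Proof.
move=> cne; exists u; split; first by rewrite recolour_id eq_sym.
by move=> y yu; rewrite recolour_other.
Qed.

Hypothesis e_simple : simple_graph e.

Lemma L_colouring_recolour (phi : {ffun T -> C}) u c :
  L_colouring e L phi -> c \in L u -> (forall y, e u y -> phi y != c) ->
  L_colouring e L (recolour phi u c).
Proof.
have [e_sym e_irr] := e_simple.
move=> [phiL phi_proper] cL free; split=> [y | a b eab].
  by case: (eqVneq y u) => [->|yu]; rewrite ?recolour_id ?recolour_other.
case: (eqVneq a u) => [au|au]; case: (eqVneq b u) => [bu|bu].
- by rewrite au bu e_irr in eab.
- by rewrite au recolour_id recolour_other // eq_sym free // -au.
- by rewrite bu recolour_id recolour_other // free // e_sym -bu.
- by rewrite !recolour_other // phi_proper.
Qed.

Hypothesis list_large : forall u, deg e u + 1 <= #|L u|.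

Lemma frozen_tight (phi : {ffun T -> C}) x :
  phi x \in L x -> frozen e L phi x ->
  phi @: nbhd e x = L x :\ phi x /\ {in nbhd e x &, injective phi}.
Proof.
move=> phixL frz.
have sub := frozen_subset_imset frz.
have cardL : #|L x| = (#|L x :\ phi x|).+1 by rewrite (cardsD1 (phi x)) phixL.
have le_deg : deg e x <= #|L x :\ phi x| by rewrite -ltnS -cardL -addn1.
have le_img : #|L x :\ phi x| <= #|phi @: nbhd e x| := subset_leq_card sub.
split; first by apply/esym/eqP; rewrite eqEcard sub (leq_trans (leq_imset_card _ _)).
apply/imset_injP; rewrite eqn_leq leq_imset_card.
exact: leq_trans le_deg le_img.
Qed.

Lemma recolour_thaws_neighbour (phi : {ffun T -> C}) u x c :
  L_colouring e L phi -> c != phi u -> e u x -> frozen e L phi x ->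
  unfrozen e L (recolour phi u c) x.
Proof.
have [e_sym e_irr] := e_simple.
move=> [phiL _] cne eux frz.
have [img inj] := frozen_tight (phiL x) frz.
have uN : u \in nbhd e x by rewrite inE e_sym.
have xu : x != u by apply: contraTneq eux => ->; rewrite e_irr.
have : phi u \in L x :\ phi x by rewrite -img imset_f.
rewrite in_setD1 => /andP[phiu_ne phiuL] frz'.
have [y exy] : exists2 y, e x y & recolour phi u c y = phi u.
  by apply: frz' => //; rewrite recolour_other.
case: (eqVneq y u) => [->|yu]; first by rewrite recolour_id => /eqP; rewrite (negbTE cne).
rewrite recolour_other // => /inj eq_yu.
by move: yu; rewrite eq_yu ?eqxx // inE.
Qed.

Lemma thaw_along_path (Q : seq T) u (phi : {ffun T -> C}) :
  L_colouring e L phi -> unfrozen e L phi u -> path e u Q ->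
  exists s, [/\ recol_seq e L phi s, unfrozen e L (last phi s) (last u Q),
    forall x, recoloured_in phi s x -> x \in belast u Q & size s <= size Q].
Proof.
elim: Q u phi => [|x Q IH] u phi phiL unf; first by exists [::].
rewrite /= => /andP[eux pathQ].
case: (frozenP phi x) => [frz|unfx]; last first.
  have [s [seq_s unf_s rec_s size_s]] := IH x phi phiL unfx pathQ.
  exists s; split=> //; last exact: leqW.
  by move=> y /rec_s recy; rewrite in_cons recy orbT.
have [c [cL cne free]] := unfrozen_free_colour unf.
set psi := recolour phi u c.
have psiL : L_colouring e L psi := L_colouring_recolour phiL cL free.
have [s [seq_s unf_s rec_s size_s]] :=
  IH x psi psiL (recolour_thaws_neighbour phiL cne eux frz) pathQ.
exists (psi :: s); split=> //=; first by split; [exact: recol_step_recolour|].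
move=> y [|/rec_s recy]; last by rewrite in_cons recy orbT.
case: (eqVneq y u) => [->|yu]; first by rewrite mem_head.
by rewrite /psi recolour_other ?eqxx.
Qed.

End Recolouring.

Lemma path_to_belast (T : finType) (e : rel T) v w (P : seq T) :
  path e v P -> w \in belast v P ->
  exists Q, [/\ path e v Q, last v Q = w & size Q < size P].
Proof.
elim: P v => [|x P IH] v //= /andP[evx pathP].
rewrite in_cons => /orP[/eqP->|/(IH x pathP)[Q [pathQ lastQ sizeQ]]].
  by exists [::].
by exists (x :: Q); split=> //=; rewrite evx.
Qed.

Lemma shortest_path_last_notin_belast (T : finType) (e : rel T) v w P :
  shortest_path e v w P -> w \notin belast v P.
Proof.
case=> pathP _ minP; apply/negP => /(path_to_belast pathP)[Q [pathQ lastQ]].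
by rewrite ltnNge minP.
Qed.

Theorem mainTheorem5 (T C : finType) (e : rel T) (L : T -> {set C})
    (alpha : {ffun T -> C}) (v w : T) (P : seq T) :
  simple_graph e -> connected_graph e ->
  (forall u, deg e u + 1 <= #|L u|) ->
  L_colouring e L alpha ->
  shortest_path e v w P ->
  unfrozen e L alpha v ->
  exists (s : seq {ffun T -> C}),
    let gamma := last alpha s in
    [/\ recol_seq e L alpha s,
        unfrozen e L gamma w,
        (forall x, recoloured_in alpha s x -> x \in v :: P /\ x != w),
        size s <= size P &
        (deg e v + 2 <= #|L v| -> unfrozen e L gamma v)].
Proof.
move=> e_simple _ list_large alphaL shortP unf.
have w_notin := shortest_path_last_notin_belast shortP.
have [pathP lastP _] := shortP.
have [s [seq_s unf_w rec_s size_s]] := thaw_along_path e_simple list_large alphaL unf pathP.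
exists s; split=> //; first by rewrite -lastP.
- move=> x /rec_s x_in; split; first exact: mem_belast x_in.
  by apply: contraNneq w_notin => <-.
- have [gammaL _] := recol_seq_last alphaL seq_s.
  exact: unfrozen_card_list.
Qed.
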